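(* Let $I$ be a general ring and $a\in I$. The following are equivalent: (1) $a$ is quasipolar in $I$; (2) there exists $b\in\mathrm{comm}^2(a)$ such that $ab^2=b$ and $a^2b-a\in QN(I)$. Moreover, an element $b$ as in (2), if it exists, is unique.
   Context: A general ring is an associative ring not necessarily having an identity. For $p,q\in I$, $p*q=p+q-pq$; $Q(I)=\{q\in I\mid p*q=0=q*p \text{ for some } p\in I\}$; $\mathrm{comm}(a)=\{x\in I\mid xa=ax\}$, $\mathrm{comm}^2(a)=\{x\in I\mid xy=yx\text{ for all }y\in\mathrm{comm}(a)\}$; $QN(I)=\{q\in I\mid qx\in Q(I)\text{ for every }x\in\mathrm{comm}(q)\}$. An element $a\in I$ is quasipolar in $I$ if there is an idempotent $p=p^2\in\mathrm{comm}^2(a)$ with $a+p\in Q(I)$ and $a-ap\in QN(I)$. *)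

(* A "general ring" = associative ring, not necessarily unital:
   an additive abelian group (zmodType) with an associative, bi-distributive
   multiplication.  No multiplicative identity is assumed. *)
From HB Require Import structures.
From mathcomp Require Import all_boot all_order all_algebra.
Set Implicit Arguments. Unset Strict Implicit. Unset Printing Implicit Defensive.
Import GRing.Theory.
Local Open Scope ring_scope.

HB.mixin Record Zmodule_isGenRing R of GRing.Zmodule R := {
  gmul : R -> R -> R;
  gmulA : associative gmul;
  gmulDl : left_distributive gmul +%R;
  gmulDr : right_distributive gmul +%R
}.

#[short(type="genRingType")]
HB.structure Definition GenRing := {R of Zmodule_isGenRing R & GRing.Zmodule R}.

Notation "x ** y" := (gmul x y) (at level 40, left associativity).

Section GenRingDefs.
Variable I : genRingType.

Definition circ (p q : I) : I := p + q - p ** q.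

Definition Qset (q : I) : Prop := exists p : I, circ p q = 0 /\ circ q p = 0.

Definition comm (a x : I) : Prop := x ** a = a ** x.
Definition comm2 (a x : I) : Prop := forall y : I, comm a y -> x ** y = y ** x.

Definition QN (q : I) : Prop := forall x : I, comm q x -> Qset (q ** x).

Definition quasipolar (a : I) : Prop :=
  exists p : I, [/\ p ** p = p, comm2 a p, Qset (a + p) & QN (a - a ** p)].

End GenRingDefs.

(* A general ring I has no identity, so we work in its Dorroh unitization
   U = Z x I, a unital ring containing I through the multiplicative embedding
   x |-> (0, x).  There the circle operation becomes multiplication of the
   elements 1 - x: (1 - p)(1 - q) = 1 - circ p q, hence q is
   quasi-invertible iff 1 - q is invertible in U, and every statement of the
   theorem turns into a statement about two-sided inverses in a unital ring.

   Call B a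
   commuting outer inverse of A when BA = AB and A B^2 = B; then P = AB is an
   idempotent commuting with A.
   - (1) => (2): if P is an idempotent commuting with A and 1 - (A + P) has
     inverse V, then B = -VP is a commuting outer inverse of A with AB = P.
   - (2) => (1): for a commuting outer inverse B, invertibility of
     1 - (A - A P) forces that of 1 - (A + P); quasinilpotent elements are
     quasi-invertible, so P = AB witnesses quasipolarity.
   - Uniqueness: an idempotent E with 1 - E invertible is 0; applied to
     E = P - P'P this gives P = P' and then B = B'. *)

From HB Require Import structures.
From mathcomp Require Import all_boot all_order all_algebra.
Set Implicit Arguments. Unset Strict Implicit. Unset Printing Implicit Defensive.
Import GRing.Theory.
Local Open Scope ring_scope.

Section GenRingArithmetic.
Variable I : genRingType.
Implicit Types x y : I.

Lemma gmulr0 x : x ** 0 = 0.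
Proof. by apply: (@addrI _ (x ** 0)); rewrite -gmulDr !addr0. Qed.

Lemma gmul0r x : 0 ** x = 0.
Proof. by apply: (@addrI _ (0 ** x)); rewrite -gmulDl !addr0. Qed.

(* Left and right multiplications are additive, which yields the sign and
   integer-scaling rules below from the generic theory of additive maps. *)
Definition gmull x : I -> I := gmul x.
Definition gmulr x : I -> I := gmul^~ x.

HB.instance Definition _ x :=
  GRing.isNmodMorphism.Build I I (gmull x) (conj (gmulr0 x) (gmulDr x)).
HB.instance Definition _ x :=
  GRing.isNmodMorphism.Build I I (gmulr x) (conj (gmul0r x) (fun y z => gmulDl y z x)).

Lemma gmulrN x y : x ** - y = - (x ** y).
Proof. exact: (raddfN (gmull x)). Qed.

Lemma gmulNr x y : (- x) ** y = - (x ** y).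
Proof. exact: (raddfN (gmulr y)). Qed.

Lemma gmulrz x y n : x ** (y *~ n) = (x ** y) *~ n.
Proof. exact: (raddfMz (gmull x)). Qed.

Lemma gmulzr x y n : (x *~ n) ** y = (x ** y) *~ n.
Proof. exact: (raddfMz (gmulr y)). Qed.
End GenRingArithmetic.

Section Unitization.
Variable I : genRingType.
Implicit Types x y : I.

(* The Dorroh extension Z x I, with (m, x)(n, y) = (mn, n x + m y + x y). *)
Definition unitization : Type := (int * I)%type.
HB.instance Definition _ := GRing.Zmodule.on unitization.

Definition unit_one : unitization := (1, 0).
Definition unit_mul (u v : unitization) : unitization :=
  (u.1 * v.1, v.2 *~ u.1 + u.2 *~ v.1 + u.2 ** v.2).

Lemma unit_mulA : associative unit_mul.
Proof.
case=> m x [n y] [k z]; rewrite /unit_mul /=; congr pair; first by rewrite mulrA.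
rewrite !gmulDl !gmulDr !gmulrz !gmulzr !mulrzDl gmulA -!mulrzA [n * m]mulrC [k * m]mulrC.
rewrite -!addrA; congr (_ + _); congr (_ + _).
by rewrite addrCA; congr (_ + _); rewrite [RHS]addrCA; congr (_ + _); rewrite addrCA.
Qed.

Lemma unit_mul1 : left_id unit_one unit_mul.
Proof. by case=> n y; rewrite /unit_mul /= mul1r mulr1z mul0rz gmul0r !addr0. Qed.

Lemma unit_mulr1 : right_id unit_one unit_mul.
Proof. by case=> n y; rewrite /unit_mul /= mulr1 mulr1z mul0rz gmulr0 add0r !addr0. Qed.

Lemma unit_mulDl : left_distributive unit_mul +%R.
Proof.
case=> m x [n y] [k z]; rewrite /unit_mul /=; congr pair; first by rewrite mulrDl.
by rewrite mulrzDr mulrzDl gmulDl /= (addrACA (z *~ m) (z *~ n)) (addrACA (z *~ m + x *~ k)).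
Qed.

Lemma unit_mulDr : right_distributive unit_mul +%R.
Proof.
case=> m x [n y] [k z]; rewrite /unit_mul /=; congr pair; first by rewrite mulrDr.
by rewrite mulrzDr mulrzDl gmulDr /= (addrACA (y *~ m) (z *~ m)) (addrACA (y *~ m + x *~ n)).
Qed.

Lemma unit_one_neq0 : unit_one != 0. Proof. by []. Qed.

HB.instance Definition _ := GRing.Zmodule_isNzRing.Build unitization
  unit_mulA unit_mul1 unit_mulr1 unit_mulDl unit_mulDr unit_one_neq0.

Definition embed x : unitization := (0, x).

Lemma embed0 : embed 0 = 0. Proof. by []. Qed.

Lemma embedD x y : embed (x + y) = embed x + embed y.
Proof. by rewrite /embed; congr pair; rewrite addr0. Qed.

Lemma embedN x : embed (- x) = - embed x.
Proof. by rewrite /embed; congr pair; rewrite oppr0. Qed.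

Lemma embedB x y : embed (x - y) = embed x - embed y.
Proof. by rewrite embedD embedN. Qed.

Lemma embedM x y : embed (x ** y) = embed x * embed y.
Proof. by rewrite /embed /GRing.mul /= /unit_mul /= mulr0 !mulr0z !add0r. Qed.

Lemma embed_inj : injective embed.
Proof. by move=> x y []. Qed.
End Unitization.

Section TwoSidedInverses.
Variable R : nzRingType.
Implicit Types c e p q u v w : R.

(* Two-sided inverses, without assuming a decidable unit predicate on R. *)
Definition inverse_of u v : Prop := v * u = 1 /\ u * v = 1.
Definition invertible u : Prop := exists v, inverse_of u v.

Lemma commr_inverse u v c : inverse_of u v -> GRing.comm c u -> GRing.comm c v.
Proof.
move=> [vu uv] cu; rewrite /GRing.comm.
by rewrite -{1}[c]mul1r -vu -(mulrA v u c) -cu mulrA -mulrA uv mulr1.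
Qed.

Lemma invertible_factor u w : GRing.comm u w -> invertible (u * w) -> invertible u.
Proof.
move=> uw [z [zl zr]].
have wz : GRing.comm w z.
  by apply: (commr_inverse (conj zl zr)); rewrite /GRing.comm mulrA -uw.
exists (w * z); split; last by rewrite mulrA.
by rewrite wz -mulrA -uw.
Qed.

(* An idempotent e with 1 - e invertible vanishes, as e (1 - e) = 0. *)
Lemma idempotent_invertible_eq0 e : e * e = e -> invertible (1 - e) -> e = 0.
Proof.
move=> ee [z [zl _]].
by rewrite -[e]mul1r -zl -mulrA mulrBl mul1r ee subrr mulr0.
Qed.

Lemma idempotent_sub_mul p q :
  p * p = p -> q * q = q -> q * p = p * q -> (p - q * p) * (p - q * p) = p - q * p.
Proof.
move=> pp qq qp.
have qpp : q * p * p = q * p by rewrite -mulrA pp.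
have pqp : p * (q * p) = q * p by rewrite mulrA -qp qpp.
have qpqp : q * p * (q * p) = q * p by rewrite -mulrA pqp mulrA qq.
by rewrite mulrBr !mulrBl pp qpp pqp qpqp subrr subr0.
Qed.
End TwoSidedInverses.

Section CommutingOuterInverse.
Variables (R : nzRingType) (A B : R).
Hypotheses (BA : B * A = A * B) (ABB : A * (B * B) = B).
Local Notation P := (A * B).

Lemma outer_idem : P * P = P.
Proof. by rewrite mulrA -(mulrA A B A) BA mulrA -!mulrA ABB. Qed.

Lemma outer_projB : P * B = B.
Proof. by rewrite -mulrA ABB. Qed.

Lemma outer_Bproj : B * P = B.
Proof. by rewrite mulrA BA outer_projB. Qed.

Lemma outer_commAP : GRing.comm A P.
Proof. by rewrite /GRing.comm -mulrA BA. Qed.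

(* If T = 1 - (A - AP) has inverse S, then W = 1 - (A + P) has inverse
   -B + (1 - P) S: indeed WB = BW = -P, W (1 - P) = (1 - P) W = T - P and
   SP = PS = P. *)
Lemma outer_invertible : invertible (1 - (A - A * P)) -> invertible (1 - (A + P)).
Proof.
move: outer_idem outer_commAP outer_projB outer_Bproj BA.
set P := A * B => PP AP PB BP BA'.
set T := 1 - (A - A * P); set W := 1 - (A + P); move=> [S [ST TS]].
have PT : P * T = P.
  by rewrite /T mulrBr mulr1 mulrBr mulrA -AP -mulrA PP subrr subr0.
have TP : T * P = P.
  by rewrite /T mulrBl mul1r mulrBl -mulrA PP subrr subr0.
have SP : S * P = P by rewrite -{1}TP mulrA ST mul1r.
have PS : P * S = P by rewrite -{1}PT -mulrA TS mulr1.
have WB : W * B = - P.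
  by rewrite /W mulrBl mul1r mulrDl PB opprD addrCA subrr addr0.
have BW : B * W = - P.
  by rewrite /W mulrBr mulr1 mulrDr BA' BP opprD addrCA subrr addr0.
have WT : W + A * P = T - P.
  by rewrite /W /T opprB opprD !addrA (addrAC (1 - A) (- P)) (addrAC 1 (- A)).
have WP : W * (1 - P) = T - P.
  have WP0 : W * P = - (A * P).
    by rewrite /W mulrBl mul1r mulrDl PP opprD addrCA subrr addr0.
  by rewrite mulrBr mulr1 WP0 opprK WT.
have PW : (1 - P) * W = T - P.
  have PW0 : P * W = - (A * P).
    by rewrite /W mulrBr mulr1 mulrDr -AP PP opprD addrCA subrr addr0.
  by rewrite mulrBl mul1r PW0 opprK WT.
have PSc : (1 - P) * S = S * (1 - P).
  by rewrite mulrBl mulrBr mul1r mulr1 PS SP.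
exists (- B + (1 - P) * S); split.
- by rewrite mulrDl mulNr BW opprK PSc -mulrA PW mulrBr ST SP addrC subrK.
- by rewrite mulrDr mulrN WB opprK mulrA WP mulrBl TS PS addrC subrK.
Qed.
End CommutingOuterInverse.

Section OuterInverseOfIdempotent.
Variables (R : nzRingType) (A P V : R).
Hypotheses (PP : P * P = P) (AP : GRing.comm A P) (WV : inverse_of (1 - (A + P)) V).
Local Notation B := (- (V * P)).

Lemma spectral_commr X : GRing.comm X A -> GRing.comm X P -> GRing.comm X B.
Proof.
move=> XA XP; apply/commrN/commrM => //.
exact: commr_inverse WV (commrB (commr1 X) (commrD XA XP)).
Qed.

Lemma spectral_mulAB : A * B = P.
Proof.
have AV : GRing.comm A V.
  exact: commr_inverse WV (commrB (commr1 A) (commrD (commr_refl A) AP)).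
have AP_W : A * P = - ((1 - (A + P)) * P).
  by rewrite mulrBl mul1r mulrDl PP opprB addrK.
by rewrite mulrN mulrA AV -mulrA AP_W mulrN opprK mulrA WV.1 mul1r.
Qed.

Lemma spectral_outer : A * (B * B) = B.
Proof.
rewrite mulrA spectral_mulAB (spectral_commr (commr_sym AP) (commr_refl P)).
by rewrite mulNr -mulrA PP.
Qed.
End OuterInverseOfIdempotent.

Section TwoCommutingOuterInverses.
Variables (R : nzRingType) (A B C : R).
Hypotheses (BA : B * A = A * B) (ABB : A * (B * B) = B).
Hypotheses (CA : C * A = A * C) (ACC : A * (C * C) = C) (CB : C * B = B * C).

Lemma outer_projs_comm : GRing.comm (A * C) (A * B).
Proof.
apply: commrM; apply/commr_sym/commrM.
- exact: commr_refl.
- exact/esym.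
- exact: BA.
- exact/esym.
Qed.

(* (A^2 C - A)(-B) = AB (1 - AC) is idempotent, so quasi-invertibility kills it. *)
Lemma outer_proj_absorb :
  invertible (1 - (A * A * C - A) * - B) -> A * B = A * C * (A * B).
Proof.
have -> : (A * A * C - A) * - B = A * B - A * C * (A * B).
  by rewrite mulrN mulrBl opprB -!mulrA (mulrA C) CA -!mulrA.
move=> inv; apply/eqP; rewrite -subr_eq0; apply/eqP.
apply: idempotent_invertible_eq0 inv.
by apply: idempotent_sub_mul; rewrite ?outer_idem ?outer_projs_comm.
Qed.

Lemma outer_eq_of_proj : A * B = A * C -> B = C.
Proof. by move=> PQ; rewrite -(outer_Bproj BA ABB) PQ mulrA BA PQ -mulrA ACC. Qed.
End TwoCommutingOuterInverses.

Lemma commuting_outer_inverse_unique (R : nzRingType) (A B C : R) :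
  B * A = A * B -> A * (B * B) = B -> C * A = A * C -> A * (C * C) = C ->
  C * B = B * C ->
  invertible (1 - (A * A * C - A) * - B) -> invertible (1 - (A * A * B - A) * - C) ->
  B = C.
Proof.
move=> BA ABB CA ACC CB invB invC; apply: (outer_eq_of_proj BA ABB ACC).
rewrite (outer_proj_absorb BA ABB CA ACC CB invB) (outer_projs_comm BA CA CB).
by rewrite -(outer_proj_absorb CA ACC BA ABB (esym CB) invC).
Qed.

Section QuasiInvertibility.
Variable I : genRingType.
Implicit Types a p q x : I.
Local Notation embed := (@embed I).

Lemma embed_circ p q : (1 - embed p) * (1 - embed q) = 1 - embed (circ p q).
Proof.
rewrite mulrBl !mulrBr !mul1r mulr1 -embedM /circ !embedB embedD /=.
by rewrite !opprD !opprK !addrA (addrAC 1 (- embed q)).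
Qed.

Lemma embed_sub_eq1 x : 1 - embed x = 1 -> x = 0.
Proof.
by move=> h; apply: embed_inj; apply: oppr_inj; apply: (addrI 1); rewrite h embed0 subr0.
Qed.

Lemma circ_inverse p q :
  circ p q = 0 -> circ q p = 0 -> inverse_of (1 - embed q) (1 - embed p).
Proof. by move=> pq qp; rewrite /inverse_of !embed_circ pq qp embed0 subr0. Qed.

(* Any inverse of 1 - q has first coordinate 1, hence has the form 1 - p. *)
Lemma Qset_invertible q : Qset q <-> invertible (1 - embed q).
Proof.
split=> [[p [pq qp]] | [[m y] [vq qv]]]; first by exists (1 - embed p); apply: circ_inverse.
have m1 : m = 1 by move: (congr1 fst vq); rewrite /= mulr1.
have vE : ((m, y) : unitization I) = 1 - embed (- y).
  by rewrite m1 embedN opprK; congr pair; rewrite ?subr0 ?add0r.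
rewrite vE !embed_circ in vq qv.
by exists (- y); split; apply: embed_sub_eq1.
Qed.

Lemma comm_embed a x : comm a x <-> GRing.comm (embed x) (embed a).
Proof. by rewrite /comm /GRing.comm -!embedM; split=> [->|/embed_inj]. Qed.

Lemma QN_opp q : QN q -> QN (- q).
Proof.
move=> hq x; rewrite /comm gmulNr gmulrN => /oppr_inj xq.
by rewrite -gmulrN; apply: hq; rewrite /comm gmulNr gmulrN xq.
Qed.

(* QN(I) is contained in Q(I): q^2 is quasi-invertible and 1 - q^2 = (1 - q)(1 + q). *)
Lemma QN_Qset q : QN q -> Qset q.
Proof.
move=> hq; have /Qset_invertible := hq q erefl; rewrite embedM.
set Q := embed q.
have -> : 1 - Q * Q = (1 - Q) * (1 + Q).
  by rewrite mulrBl mul1r mulrDr mulr1 opprD addrA addrK.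
move=> /invertible_factor inv; apply/Qset_invertible/inv.
exact: commrD (commr1 _) (commr_sym (commrB (commr1 Q) (commr_refl Q))).
Qed.
End QuasiInvertibility.

Section QuasipolarCharacterization.
Variable I : genRingType.
Implicit Types a b c d e : I.
Local Notation embed := (@embed I).

Definition qp_inverse a b : Prop :=
  [/\ comm2 a b, a ** (b ** b) = b & QN (a ** a ** b - a)].

Lemma quasipolar_qp_inverse a : quasipolar a -> exists b, qp_inverse a b.
Proof.
case=> p [pp cp [w [wq qw]] qn].
have WV := circ_inverse wq qw; rewrite embedD in WV.
have PP : embed p * embed p = embed p by rewrite -embedM pp.
have AP : GRing.comm (embed a) (embed p) by apply/commr_sym/comm_embed/cp.
have Eb : embed (w ** p - p) = - ((1 - embed w) * embed p).
  by rewrite mulrBl mul1r opprB -embedM embedB.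
have ab : a ** (w ** p - p) = p.
  by apply: embed_inj; rewrite embedM Eb (spectral_mulAB PP AP WV).
exists (w ** p - p); split.
- move=> y ya; apply: (comm_embed y _).2; rewrite Eb; apply: commr_sym.
  apply: (spectral_commr WV); first exact: (comm_embed _ _).1.
  exact/commr_sym/(comm_embed _ _).1/cp.
- by apply: embed_inj; rewrite !embedM Eb (spectral_outer PP AP WV).
- by rewrite -gmulA ab -opprB; apply: QN_opp.
Qed.

Lemma qp_inverse_quasipolar a b : qp_inverse a b -> quasipolar a.
Proof.
move=> [cb abb qn].
have BA : embed b * embed a = embed a * embed b by apply/(comm_embed _ _).1/cb.
have ABB : embed a * (embed b * embed b) = embed b by rewrite -!embedM abb.
have qn' : QN (a - a ** (a ** b)) by rewrite gmulA -opprB; apply: QN_opp.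
exists (a ** b); split => //.
- by apply: embed_inj; rewrite !embedM (outer_idem BA ABB).
- by move=> y ya; rewrite -gmulA (cb y ya) gmulA -ya -gmulA.
- apply/Qset_invertible; rewrite embedD embedM; apply: (outer_invertible BA ABB).
  by move/QN_Qset/Qset_invertible: qn'; rewrite embedB !embedM.
Qed.

Lemma qp_inverse_invertible a d e :
  QN (a ** a ** d - a) ->
  GRing.comm (embed e) (embed a) -> GRing.comm (embed d) (embed e) ->
  invertible (1 - (embed a * embed a * embed d - embed a) * - embed e).
Proof.
move=> qd EA DE.
have : Qset ((a ** a ** d - a) ** - e).
  apply: qd; apply/(comm_embed _ _).2; rewrite embedN embedB !embedM.
  apply/commr_sym/commrN/commr_sym/commrB => //.
  by apply: commrM; [apply: commrM | apply: esym].
by move/Qset_invertible; rewrite embedM embedN embedB !embedM.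
Qed.

Lemma qp_inverse_unique a b c : qp_inverse a b -> qp_inverse a c -> b = c.
Proof.
move=> [cb abb qb] [cc acc qc]; apply: embed_inj.
have BA : embed b * embed a = embed a * embed b by apply/(comm_embed _ _).1/cb.
have CA : embed c * embed a = embed a * embed c by apply/(comm_embed _ _).1/cc.
have CB : embed c * embed b = embed b * embed c by apply/(comm_embed _ _).1/cc/cb.
have ABB : embed a * (embed b * embed b) = embed b by rewrite -!embedM abb.
have ACC : embed a * (embed c * embed c) = embed c by rewrite -!embedM acc.
apply: (commuting_outer_inverse_unique BA ABB CA ACC CB).
- exact: qp_inverse_invertible qc BA CB.
- exact: qp_inverse_invertible qb CA (esym CB).
Qed.
End QuasipolarCharacterization.

Unset Implicit Arguments.
Unset Strict Implicit.

Theorem theorem2p8 (I : genRingType) (a : I) :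
  (quasipolar a <->
     exists b : I, [/\ comm2 a b, a ** (b ** b) = b & QN (a ** a ** b - a)])
  /\ (forall b b' : I,
        [/\ comm2 a b, a ** (b ** b) = b & QN (a ** a ** b - a)] ->
        [/\ comm2 a b', a ** (b' ** b') = b' & QN (a ** a ** b' - a)] ->
        b = b').
Proof.
split; first split.
- exact: quasipolar_qp_inverse.
- by case=> b; apply: qp_inverse_quasipolar.
- exact: qp_inverse_unique.
Qed.
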